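(* Let $\phi:\mathbb{R}^m\to\mathbb{R}^n$ be a quadratic harmonic morphism. Then its complete lift $\Phi:\mathbb{R}^m\times\mathbb{R}^m\to\mathbb{R}^n$, $\Phi(x,y)=J\phi(x)\,y$ (the Jacobian matrix of $\phi$ at $x$ applied to the column vector $y$), is again a quadratic harmonic morphism.
   Context: A map $\psi:\mathbb{R}^N\to\mathbb{R}^n$ is quadratic if all its components are homogeneous polynomials of degree $2$. A smooth map $\psi:\mathbb{R}^N\to\mathbb{R}^n$ is a harmonic morphism if for every harmonic function $f$ defined on an open set $V\subset\mathbb{R}^n$ with $\psi^{-1}(V)\neq\emptyset$, the function $f\circ\psi$ is harmonic on $\psi^{-1}(V)$; equivalently, $\psi$ is harmonic (each component satisfies $\sum_i\partial^2\psi^k/\partial x_i^2=0$) and horizontally weakly conformal (there is a function $\lambda$ with $\sum_i\frac{\partial\psi^k}{\partial x_i}\frac{\partial\psi^l}{\partial x_i}=\lambda^2\delta_{kl}$ for all $k,l$). *)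

From HB Require Import structures.
From mathcomp Require Import all_boot all_order all_algebra.
From mathcomp Require Import reals.
From mathcomp Require Import mpoly.
Set Implicit Arguments. Unset Strict Implicit. Unset Printing Implicit Defensive.
Import Order.TTheory GRing.Theory Num.Theory.
Local Open Scope ring_scope.

(* A polynomial map R^m -> R^n is encoded by its n component polynomials
   p k : {mpoly R[m]}; the map is x |-> (fun k => (p k).@[x]).
   For polynomials, formal partial derivatives (mderiv) coincide with the
   analytic ones. *)

Section Defs.
Variable R : realType.

Definition pmap_eval m n (p : 'I_n -> {mpoly R[m]}) (x : 'I_m -> R) : 'I_n -> R :=
  fun k => (p k).@[x].

Definition quadratic_map m n (p : 'I_n -> {mpoly R[m]}) : Prop :=
  forall k, p k \is 2.-homog.

Definition harmonic_map m n (p : 'I_n -> {mpoly R[m]}) : Prop :=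
  forall (k : 'I_n) (x : 'I_m -> R),
    (\sum_(i < m) mderiv i (mderiv i (p k))).@[x] = 0.

Definition hwc_map m n (p : 'I_n -> {mpoly R[m]}) : Prop :=
  exists lam : ('I_m -> R) -> R,
    forall (x : 'I_m -> R) (k l : 'I_n),
      \sum_(i < m) (mderiv i (p k)).@[x] * (mderiv i (p l)).@[x]
        = lam x ^+ 2 * (k == l)%:R.

Definition harmonic_morphism m n (p : 'I_n -> {mpoly R[m]}) : Prop :=
  harmonic_map p /\ hwc_map p.

(* R^m x R^m is identified with R^(m+m): coordinates x_i = X_(lshift m i),
   y_j = X_(rshift m j). *)
Definition xvars m : m.-tuple {mpoly R[m + m]} :=
  [tuple 'X_(lshift m i) | i < m].

Definition complete_lift m n (p : 'I_n -> {mpoly R[m]}) : 'I_n -> {mpoly R[m + m]} :=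
  fun k => \sum_(j < m) ((mderiv j (p k)) \mPo (xvars m)) * 'X_(rshift m j).

End Defs.

From HB Require Import structures.
From mathcomp Require Import all_boot all_order all_algebra.
From mathcomp Require Import reals.
From mathcomp Require Import mpoly.
Set Implicit Arguments. Unset Strict Implicit. Unset Printing Implicit Defensive.
Import Order.TTheory GRing.Theory Num.Theory.
Local Open Scope ring_scope.

(** The partial derivatives of a quadratic map phi are linear forms,
    d_j phi^k (x) = sum_i a^k_ji x_i with a symmetric Hessian a^k, so the
    complete lift Phi^k (x, y) = sum_ij a^k_ji x_i y_j is a bilinear form.
    Bilinearity makes every pure second derivative of Phi^k vanish, hence Phi
    is harmonic, and by the symmetry of a^k its gradient is
    (grad phi^k (y), grad phi^k (x)).  The conformality relations of phi at x
    and at y therefore add up to those of Phi at (x, y), with dilation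
    sqrt (lambda(x)^2 + lambda(y)^2). *)

Section LinearForms.
Variable R : nzRingType.

Definition mlinform N M (c : 'I_M -> R) (f : 'I_M -> 'I_N) : {mpoly R[N]} :=
  \sum_(i < M) c i *: 'X_(f i).

Definition mbilinform p q (c : 'I_q -> 'I_p -> R) : {mpoly R[p + q]} :=
  \sum_(j < q) mlinform (c j) (@lshift p q) * 'X_(rshift p j).

Lemma mderivXU N (u v : 'I_N) : ('X_u : {mpoly R[N]})^`M(v) = (u == v)%:R%:MP.
Proof.
rewrite mderivX mnm1E; case: eqP => [->|_]; last by rewrite scale0r.
have -> : (U_(v) - U_(v) = 0)%MM by apply/mnmP => k; rewrite mnmBE mnm0E subnn.
by rewrite mpolyX0 scale1r.
Qed.

Lemma mderiv_dhomogS N d (p : {mpoly R[N]}) j :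
  p \is d.+1.-homog -> p^`M(j) \is d.-homog.
Proof.
move=> hp; apply/dhomogP => mm; rewrite mcoeff_msupp mcoeff_mderiv => nz.
have nz' : p@_(mm + U_(j)) != 0 by apply: contra nz => /eqP ->; rewrite mul0rn.
have := dhomog_mf hp; move/(_ (mm + U_(j))%MM); rewrite mcoeff_msupp nz' => /(_ isT).
by rewrite /= mdegD mdeg1 addn1 => -[].
Qed.

Lemma mcoeffU_mderivC N (p : {mpoly R[N]}) i j :
  (p^`M(j))@_U_(i) = (p^`M(i))@_U_(j).
Proof. by rewrite !mcoeff_mderiv addmC !mnm1E eq_sym. Qed.

Lemma dhomog1E N (p : {mpoly R[N]}) :
  p \is 1.-homog -> p = mlinform (fun i => p@_U_(i)) id.
Proof.
move=> hp; apply/mpolyP => mm; rewrite raddf_sum /=.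
under eq_bigr => i _ do rewrite mcoeffZ mcoeffX.
have [/mdeg1P [i /eqP ->]|nd] := boolP (mdeg mm == 1%N).
  rewrite (bigD1 i) //= eqxx mulr1 big1 ?addr0 // => j ji.
  by rewrite eq_mnm1 (negbTE ji) mulr0.
rewrite (dhomog_nemf_coeff hp nd) big1 // => i _.
by case: eqP => [E|]; [move: nd; rewrite -E mdeg1 | rewrite mulr0].
Qed.

Lemma mlinform_dhomog N M (c : 'I_M -> R) (f : 'I_M -> 'I_N) :
  mlinform c f \is 1.-homog.
Proof.
apply: rpred_sum => i _; apply: dhomogZ.
by rewrite dhomogX; apply/eqP; exact: mdeg1.
Qed.

Lemma mderiv_mlinform N M (c : 'I_M -> R) (f : 'I_M -> 'I_N) v :
  (mlinform c f)^`M(v) = (\sum_(i < M) c i * (f i == v)%:R)%:MP.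
Proof.
rewrite raddf_sum /= raddf_sum /=; apply: eq_bigr => i _.
by rewrite mderivZ mderivXU -mul_mpolyC -mpolyCM.
Qed.

Lemma mderiv_mlinform_inj N M (c : 'I_M -> R) (f : 'I_M -> 'I_N) i :
  injective f -> (mlinform c f)^`M(f i) = (c i)%:MP.
Proof.
move=> f_inj; rewrite mderiv_mlinform (bigD1 i) //= eqxx mulr1 big1 ?addr0 //.
by move=> k ki; rewrite (inj_eq f_inj) (negbTE ki) mulr0.
Qed.

Lemma mderiv_mlinform_out N M (c : 'I_M -> R) (f : 'I_M -> 'I_N) v :
  (forall i, f i != v) -> (mlinform c f)^`M(v) = 0.
Proof.
by move=> fv; rewrite mderiv_mlinform big1 // => i _; rewrite (negbTE (fv i)) mulr0.
Qed.

Variables p q : nat.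
Implicit Type c : 'I_q -> 'I_p -> R.

Lemma mbilinform_dhomog c : mbilinform c \is 2.-homog.
Proof.
apply: rpred_sum => j _; apply: (dhomogM (d := 1%N) (e := 1%N)).
  exact: mlinform_dhomog.
by rewrite dhomogX; apply/eqP; exact: mdeg1.
Qed.

Lemma mderiv_mbilinform_l c i :
  (mbilinform c)^`M(lshift q i) = mlinform (c^~ i) (@rshift p q).
Proof.
rewrite raddf_sum /=; apply: eq_bigr => j _.
rewrite mderivM mderivXU eq_rlshift mulr0 addr0.
by rewrite mderiv_mlinform_inj ?mul_mpolyC //; exact: lshift_inj.
Qed.

Lemma mderiv_mbilinform_r c j :
  (mbilinform c)^`M(rshift p j) = mlinform (c j) (@lshift p q).
Proof.
have dl0 k : (mlinform (c k) (@lshift p q))^`M(rshift p j) = 0.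
  by apply: mderiv_mlinform_out => i; rewrite eq_lrshift.
rewrite raddf_sum /= (bigD1 j) //= big1 ?addr0 => [|k kj].
  by rewrite mderivM mderivXU eqxx mulr1 dl0 mul0r add0r.
by rewrite mderivM mderivXU eq_rshift (negbTE kj) mulr0 addr0 dl0 mul0r.
Qed.

Lemma mderiv2_mbilinform c v : (mbilinform c)^`M(v)^`M(v) = 0.
Proof.
rewrite -(splitK v); case: (split v) => [i|j] /=.
  by rewrite mderiv_mbilinform_l mderiv_mlinform_out // => j; rewrite eq_rlshift.
by rewrite mderiv_mbilinform_r mderiv_mlinform_out // => i; rewrite eq_lrshift.
Qed.

End LinearForms.

Lemma meval_mlinform (R : comNzRingType) N M (c : 'I_M -> R) (f : 'I_M -> 'I_N) z :
  (mlinform c f).@[z] = \sum_(i < M) c i * z (f i).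
Proof. by rewrite raddf_sum /=; apply: eq_bigr => i _; rewrite mevalZ mevalXU. Qed.

Section CompleteLift.
Variables (R : realType) (m n : nat) (phi : 'I_n -> {mpoly R[m]}).
Hypothesis phi_quad : quadratic_map phi.

Definition hessian (k : 'I_n) (j i : 'I_m) : R := ((phi k)^`M(j))@_U_(i).

Lemma mderiv_quadratic k j : (phi k)^`M(j) = mlinform (hessian k j) id.
Proof. exact/dhomog1E/mderiv_dhomogS/phi_quad. Qed.

Lemma complete_liftE k : complete_lift phi k = mbilinform (hessian k).
Proof.
apply: eq_bigr => j _; congr (_ * _).
rewrite mderiv_quadratic raddf_sum /=; apply: eq_bigr => i _.
by rewrite comp_mpolyZ comp_mpolyXU -tnth_nth tnth_mktuple.
Qed.

Lemma quadratic_complete_lift : quadratic_map (complete_lift phi).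
Proof. by move=> k; rewrite complete_liftE; exact: mbilinform_dhomog. Qed.

Lemma harmonic_complete_lift : harmonic_map (complete_lift phi).
Proof.
move=> k z; rewrite complete_liftE big1 ?meval0 // => v _.
exact: mderiv2_mbilinform.
Qed.

Lemma meval_mderiv_complete_lift_l k i z :
  ((complete_lift phi k)^`M(lshift m i)).@[z]
    = ((phi k)^`M(i)).@[fun j => z (rshift m j)].
Proof.
rewrite complete_liftE mderiv_mbilinform_l mderiv_quadratic !meval_mlinform.
by apply: eq_bigr => j _; rewrite /hessian mcoeffU_mderivC.
Qed.

Lemma meval_mderiv_complete_lift_r k j z :
  ((complete_lift phi k)^`M(rshift m j)).@[z]
    = ((phi k)^`M(j)).@[fun i => z (lshift m i)].
Proof.
by rewrite complete_liftE mderiv_mbilinform_r mderiv_quadratic !meval_mlinform.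
Qed.

Lemma hwc_complete_lift : hwc_map phi -> hwc_map (complete_lift phi).
Proof.
move=> [lam conf].
exists (fun z => Num.sqrt (lam (fun j => z (rshift m j)) ^+ 2
                           + lam (fun i => z (lshift m i)) ^+ 2)) => z k l.
rewrite sqr_sqrtr ?addr_ge0 ?sqr_ge0 // mulrDl -!conf big_split_ord /=.
congr (_ + _); apply: eq_bigr => i _.
  exact: (congr2 *%R (meval_mderiv_complete_lift_l k i z)
                     (meval_mderiv_complete_lift_l l i z)).
exact: (congr2 *%R (meval_mderiv_complete_lift_r k i z)
                   (meval_mderiv_complete_lift_r l i z)).
Qed.

End CompleteLift.

Theorem theorem3p3 (R : realType) (m n : nat) (phi : 'I_n -> {mpoly R[m]}) :
  quadratic_map phi -> harmonic_morphism phi ->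
  quadratic_map (complete_lift phi) /\ harmonic_morphism (complete_lift phi).
Proof.
move=> phi_quad [_ phi_hwc]; split; first exact: quadratic_complete_lift.
split; first exact: harmonic_complete_lift.
exact: hwc_complete_lift.
Qed.
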